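(* With $\tau=\frac{1}{4(n-1)}\left(u_2-\frac{n-2}{2(n-1)}u_1^2\right)$, $e=\frac{\partial}{\partial u_{n-1}}$, and $E^i:=\sum_j g^{ij}\frac{\partial\tau}{\partial u_j}$, one has $E^i=\sum_{l,j}g^{il}\eta_{lj}e^j$ for all $i$.
   Context: $n\ge2$. $u_k=\sum_{1\le i_1<\dots<i_k\le n}p_{i_1}^2\cdots p_{i_k}^2$ ($k=1,\dots,n$), $u_0=1$, $u_k=0$ for $k<0$ or $k>n$, coordinates on $\mathbb{C}^n/B_n$. $g^{ij}(u)=\sum_{k,l}\frac{1-\delta^{kl}}{p_kp_l}\frac{\partial u_i}{\partial p_k}\frac{\partial u_j}{\partial p_l}$, $\eta^{ij}(u)=\frac{\partial g^{ij}}{\partial u_{n-1}}(u)=4(2n-i-j)u_{i+j-n-1}$ (nondegenerate), and $\eta_{ij}$ denotes the inverse matrix of $\eta^{ij}$. *)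

From HB Require Import structures.
From mathcomp Require Import all_boot all_order all_algebra.
From mathcomp Require Import mpoly.
Set Implicit Arguments. Unset Strict Implicit. Unset Printing Implicit Defensive.
Import Order.TTheory GRing.Theory Num.Theory.
Local Open Scope ring_scope.

Section Defs.
Variable F : numClosedFieldType.
Variable n : nat.

(* Indices 1..n of the paper are represented by i : 'I_n, with paper index i.+1. *)

Definition upoly (k : nat) : {mpoly F[n]} :=
  \sum_(S : {set 'I_n} | #|S| == k) \prod_(i in S) ('X_i ^+ 2).

Definition uval (p : 'I_n -> F) (k : int) : F :=
  if (k < 0)%R then 0 else (upoly `|k|%N).@[p].

Definition uvec (p : 'I_n -> F) : 'I_n -> F := fun j => uval p (j.+1)%:Z.

Definition gup (p : 'I_n -> F) (i j : 'I_n) : F :=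
  \sum_(k < n) \sum_(l < n)
     ((if k == l then 0 else 1) / (p k * p l))
     * ((upoly i.+1)^`M(k)).@[p] * ((upoly j.+1)^`M(l)).@[p].

Definition etaup (p : 'I_n -> F) : 'M[F]_n :=
  \matrix_(i < n, j < n)
     (4 * (2 * n - i.+1 - j.+1)%N%:R * uval p ((i.+1 + j.+1)%:Z - n%:Z - 1)).

Definition etalow (p : 'I_n -> F) : 'M[F]_n := invmx (etaup p).

(* the flat coordinate function u_k (k = 1..n) as a polynomial in the
   coordinates u_1..u_n (variable 'X_j stands for u_{j.+1}) *)
Definition Uvar (k : nat) : {mpoly F[n]} := \sum_(j < n | j.+1 == k) 'X_j.

Definition tau : {mpoly F[n]} :=
  ((4 * (n - 1))%N%:R)^-1 *:
    (Uvar 2 - ((n - 2)%N%:R / (2 * (n - 1))%N%:R) *: (Uvar 1 ^+ 2)).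

Definition dtau (p : 'I_n -> F) (j : 'I_n) : F := (tau^`M(j)).@[uvec p].

Definition evec (j : 'I_n) : F := if j.+1 == (n - 1)%N then 1 else 0.

Definition Evec (p : 'I_n -> F) (i : 'I_n) : F :=
  \sum_(j < n) gup p i j * dtau p j.

End Defs.

From HB Require Import structures.
From mathcomp Require Import all_boot all_order all_algebra.
From mathcomp Require Import fingroup perm.
From mathcomp Require Import mpoly zify ring.
Import Order.TTheory GRing.Theory Num.Theory.
Local Open Scope ring_scope.

(* Since E = g (grad tau), it suffices to show grad tau = eta^-1 e, i.e.
   eta (grad tau) = e; the metric g is only a common left factor.  As tau
   depends on u_1 and u_2 alone, row i of eta (grad tau) involves just
   eta^{i1} and eta^{i2}.  The matrix eta^{ij} = 4 (2n-i-j) u_{i+j-n-1}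
   vanishes above the antidiagonal (i + j < n + 1) and equals 4 (n-1) on it,
   so it is invertible, and the three remaining rows are checked by hand:
   rows i < n-1 vanish, row n-1 gives 4(n-1) tau_2 = 1 and row n gives
   4(n-1) tau_1 + 4(n-2) u_1 tau_2 = 0. *)

Lemma mderivXU (R : comNzRingType) n (i j : 'I_n) :
  ('X_i : {mpoly R[n]})^`M(j) = (i == j)%:R.
Proof.
rewrite mderivX mnm1E; case: eqP => [->|_]; last by rewrite scale0r.
by rewrite -{1}(add0m U_(j)%MM) addmK mpolyX0 scale1r.
Qed.

Lemma anti_trig_unitmx (R : fieldType) k (A : 'M[R]_k) :
  (forall i j : 'I_k, (i + j < k.-1)%N -> A i j = 0) ->
  (forall i : 'I_k, A i (rev_ord i) != 0) ->
  A \in unitmx.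
Proof.
move=> A_above A_antidiag.
pose s : 'S_k := perm (@rev_ord_inj k).
have trig_As : is_trig_mx (col_perm s A).
  apply/is_trig_mxP => i j ltij; rewrite mxE permE A_above //=.
  case: i j ltij => i ? [j ?] /=; rewrite -subn1; lia.
have : \prod_i col_perm s A i i != 0.
  by apply/prodf_neq0 => i _; rewrite mxE permE A_antidiag.
rewrite -det_trig // col_permE det_mulmx mulf_eq0 negb_or => /andP[detA _].
by rewrite unitmxE unitfE.
Qed.

Section FlatCoordinates.
Variables (F : numClosedFieldType) (m : nat).
Local Notation n := m.+2.
Variable p : 'I_n -> F.

Lemma mderiv_Uvar k (j : 'I_n) : (Uvar F n k)^`M(j) = (j.+1 == k)%:R.
Proof.
rewrite /Uvar raddf_sum /=; under eq_bigr => i _ do rewrite mderivXU.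
have [<-|nejk] := eqVneq j.+1 k.
  by rewrite (bigD1 j) //= eqxx big1 ?addr0 // => i /andP[_ /negPf ->].
rewrite big1 // => i /eqP eqik; case: eqP => // eqij.
by rewrite -eqij eqik eqxx in nejk.
Qed.

Lemma meval_Uvar1 : (Uvar F n 1).@[uvec p] = uval p 1.
Proof.
by rewrite /Uvar raddf_sum /= big_mkcond big_ord_recl big1 //= addr0 mevalXU.
Qed.

Lemma uval_lt0 (k : int) : k < 0 -> uval p k = 0.
Proof. by rewrite /uval => ->. Qed.

Lemma uval0 : uval p 0 = 1.
Proof.
rewrite /uval ltxx /= /upoly (big_pred1 set0) ?big_set0 ?meval1 // => S.
by rewrite /= cards_eq0.
Qed.

Lemma dtauE (j : 'I_n) :
  dtau p j = (4 * m.+1%:R)^-1 *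
    ((j.+1 == 2)%:R - m%:R / (2 * m.+1%:R) * (2 * (j.+1 == 1)%:R * uval p 1)).
Proof.
rewrite /dtau /tau mderivZ mderivB mderivZ expr2 mderivM !mderiv_Uvar.
rewrite mevalZ mevalB mevalZ mevalD !mevalM -!mpolyC_nat !mevalC meval_Uvar1.
by rewrite !subSS !subn0 !natrM; ring.
Qed.

Lemma dtau_ge2 (j : 'I_n) : (2 <= j)%N -> dtau p j = 0.
Proof.
rewrite dtauE; case: j => [[|[|j]] //= _ _].
by rewrite mulr0 mul0r mulr0 subr0 mulr0.
Qed.

Lemma etaup_above (i j : 'I_n) : (i + j < m.+1)%N -> etaup p i j = 0.
Proof. by move=> ltijm; rewrite mxE uval_lt0 ?mulr0 //; lia. Qed.

Lemma etaup_antidiag (i j : 'I_n) :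
  (i + j = m.+1)%N -> etaup p i j = 4 * m.+1%:R.
Proof.
move=> eqijm; rewrite mxE (_ : _ - _ - 1 = 0); last lia.
by rewrite uval0 mulr1 (_ : (2 * n - i.+1 - j.+1)%N = m.+1) //; lia.
Qed.

Lemma etaup_subantidiag (i j : 'I_n) :
  (i + j = m.+2)%N -> etaup p i j = 4 * m%:R * uval p 1.
Proof.
move=> eqijm; rewrite mxE (_ : _ - _ - 1 = 1); last lia.
by rewrite (_ : (2 * n - i.+1 - j.+1)%N = m) //; lia.
Qed.

Lemma etaup_unitmx : etaup p \in unitmx.
Proof.
apply: anti_trig_unitmx => [i j /etaup_above //|i].
rewrite etaup_antidiag /=; last by case: i => i /= ?; lia.
by rewrite mulf_eq0 !pnatr_eq0.
Qed.

Lemma etaup_dtau (i : 'I_n) : \sum_j etaup p i j * dtau p j = evec F i.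
Proof.
rewrite 2!big_ord_recl big1 => [|j _]; last by rewrite dtau_ge2 ?mulr0.
rewrite addr0 !dtauE /= /evec subn1 eqSS.
case: ltngtP => [ltim|gtim|eqim].
- by rewrite !etaup_above /= ?addn0 ?addn1 ?ltnS ?(ltnW ltim) //; ring.
- have ltin := ltn_ord i.
  rewrite etaup_antidiag ?etaup_subantidiag /= ?addn0 ?addn1; try lia.
  by field; rewrite addrC natr1 pnatr_eq0.
- rewrite (etaup_above i ord0) ?(etaup_antidiag i (lift ord0 ord0)) /=
    ?addn0 ?addn1 ?eqim //.
  by field; rewrite addrC natr1 pnatr_eq0.
Qed.

Lemma etaup_mul_dtau : etaup p *m (\col_j dtau p j) = \col_j evec F j.
Proof.
apply/matrixP => i k; rewrite !mxE -etaup_dtau.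
by apply: eq_bigr => j _; rewrite [X in _ * X]mxE.
Qed.

End FlatCoordinates.

Theorem mainTheorem16 (F : numClosedFieldType) (n : nat) (p : 'I_n -> F) :
  (2 <= n)%N ->
  (forall k : 'I_n, p k != 0) ->
  forall i : 'I_n,
    Evec p i = \sum_(l < n) \sum_(j < n) gup p i l * etalow p l j * @evec F n j.
Proof.
case: n p => [|[|m]] p // _ _ i.
have grad_tau : \col_j dtau p j = etalow p *m \col_j evec F j.
  by rewrite -(@etaup_mul_dtau _ _ p) mulKmx // etaup_unitmx.
rewrite /Evec; apply: eq_bigr => l _.
have := congr1 (fun v : 'cV_m.+2 => v l 0) grad_tau; rewrite !mxE => ->.
by rewrite mulr_sumr; apply: eq_bigr => j _; rewrite mxE mulrA.
Qed.
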